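(* Let $(\mathfrak{h},[\cdot,\cdot])$ be a finite-dimensional real left Leibniz algebra with $H^0(\mathfrak{h})=H^1(\mathfrak{h})=0$. Let $(A_{n,1})_{n\ge0}$ be a sequence with $A_{0,1}(x,y)=y$, $A_{1,1}(x,y)=[x,y]$, and for each $n\ge2$, $A_{n,1}:\mathfrak{h}^{n+1}\to\mathfrak{h}$ multilinear, invariant, and symmetric in its first $n$ arguments. Writing $A_{p,1}(x,y)=A_{p,1}(x,\ldots,x,y)$, assume that for all $p\ge1$ and all $x,y,z\in\mathfrak{h}$, \[A_{p,1}(x,[y,z])=[y,A_{p,1}(x,z)]+[A_{p,1}(x,y),z]+\sum_{r=1}^{p-1}[A_{r,1}(x,y),A_{p-r,1}(x,z)].\] Then there exists a unique sequence $(B_n)_{n\ge2}$ of invariant symmetric multilinear maps $B_n:\mathfrak{h}^n\to\mathfrak{h}$ such that for every $n\ge2$ and all $x,y\in\mathfrak{h}$, \[A_{n,1}(x,y)=A^0_{n,1}(x,y)+\sum_{k=1}^{[n/2]}\ \sum_{\substack{(l_1,\ldots,l_k),\ l_i\ge2\\ s=l_1+\cdots+l_k\le n}}A^0_{k,1}\big(B_{l_1}(x),\ldots,B_{l_k}(x),A^0_{n-s,1}(x,y)\big),\] where $B_l(x)=B_l(x,\ldots,x)$ and the inner sum is over ordered tuples.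
   Context: Left Leibniz algebra: bilinear bracket with $[u,[v,w]]=[[u,v],w]+[v,[u,w]]$; $\mathrm{ad}_x(y)=[x,y]$. $H^0(\mathfrak{h})=\{x\in\mathfrak{h}:[x,m]=0\ \forall m\in\mathfrak{h}\}$. $H^1(\mathfrak{h})$ is the quotient of the space of linear maps $F:\mathfrak{h}\to\mathfrak{h}$ with $F([y,z])=[y,F(z)]+[F(y),z]$ for all $y,z$, by the subspace $\{\mathrm{ad}_x:x\in\mathfrak{h}\}$. A multilinear map $A:\mathfrak{h}^{m}\to\mathfrak{h}$ is invariant if $[x,A(y_1,\ldots,y_m)]=\sum_{i=1}^mA(y_1,\ldots,[x,y_i],\ldots,y_m)$ for all $x,y_1,\ldots,y_m$. The maps $A^0_{k,1}$ are defined by $A^0_{0,1}(x,y)=y$ and $A^0_{k,1}(x_1,\ldots,x_k,y)=\frac{1}{(k!)^2}\sum_{\sigma\in S_k}\mathrm{ad}_{x_{\sigma(1)}}\circ\cdots\circ\mathrm{ad}_{x_{\sigma(k)}}(y)$ for $k\ge1$, with $A^0_{k,1}(x,y)=A^0_{k,1}(x,\ldots,x,y)$. *)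

From HB Require Import structures.
From mathcomp Require Import all_boot all_order all_fingroup all_algebra.
From mathcomp Require Import reals.
Set Implicit Arguments. Unset Strict Implicit. Unset Printing Implicit Defensive.
Import Order.TTheory GRing.Theory Num.Theory.
Local Open Scope ring_scope.

Section Defs.
Variables (R : realType) (h : vectType R).
Variable br : h -> h -> h.

Definition upd (m : nat) (t : 'I_m -> h) (i : 'I_m) (v : h) : 'I_m -> h :=
  fun j => if j == i then v else t j.

Definition left_leibniz : Prop :=
  [/\ forall (a : R) u v w, br (a *: u + v) w = a *: br u w + br v w,
      forall (a : R) u v w, br u (a *: v + w) = a *: br u v + br u w
    & forall u v w, br u (br v w) = br (br u v) w + br v (br u w)].

Definition H0_trivial : Prop :=
  forall x : h, (forall m, br x m = 0) -> x = 0.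

Definition H1_trivial : Prop :=
  forall F : h -> h,
    (forall (a : R) u v, F (a *: u + v) = a *: F u + F v) ->
    (forall y z, F (br y z) = br y (F z) + br (F y) z) ->
    exists x : h, forall y, F y = br x y.

Definition is_multilinear (m : nat) (f : ('I_m -> h) -> h) : Prop :=
  forall (t : 'I_m -> h) (i : 'I_m) (a : R) (u v : h),
    f (upd t i (a *: u + v)) = a *: f (upd t i u) + f (upd t i v).

Definition is_symmetric (m : nat) (f : ('I_m -> h) -> h) : Prop :=
  forall (t : 'I_m -> h) (s : 'S_m), f (t \o s) = f t.

Definition is_invariant (m : nat) (f : ('I_m -> h) -> h) : Prop :=
  forall (x : h) (t : 'I_m -> h),
    br x (f t) = \sum_(i < m) f (upd t i (br x (t i))).

(* Maps h^{n+1} -> h written as  A xs y  with xs : 'I_n -> h (first n args), y the last *)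
Definition is_multilinear1 (n : nat) (A : ('I_n -> h) -> h -> h) : Prop :=
  (forall y, is_multilinear (fun xs => A xs y)) /\
  (forall xs (a : R) u v, A xs (a *: u + v) = a *: A xs u + A xs v).

Definition is_symmetric1 (n : nat) (A : ('I_n -> h) -> h -> h) : Prop :=
  forall y, is_symmetric (fun xs => A xs y).

Definition is_invariant1 (n : nat) (A : ('I_n -> h) -> h -> h) : Prop :=
  forall (x : h) (xs : 'I_n -> h) (y : h),
    br x (A xs y) = \sum_(i < n) A (upd xs i (br x (xs i))) y + A xs (br x y).

Definition cst (m : nat) (x : h) : 'I_m -> h := fun _ => x.

Definition A0 (k : nat) (xs : 'I_k -> h) (y : h) : h :=
  ((k`! ^ 2)%N%:R : R)^-1 *:
    \sum_(s : 'S_k) foldr (fun i acc => br (xs (s i)) acc) y (enum 'I_k).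

End Defs.

Arguments cst {R h} m x _.
Arguments A0 {R h} br k xs y.

From HB Require Import structures.
From mathcomp Require Import all_boot all_order all_fingroup all_algebra.
From mathcomp Require Import reals.
From mathcomp Require Import zify.
From Stdlib Require Import FunctionalExtensionality ClassicalEpsilon.
Set Implicit Arguments. Unset Strict Implicit. Unset Printing Implicit Defensive.
Import Order.TTheory GRing.Theory Num.Theory.
Local Open Scope ring_scope.

(* Families indexed by degree are encoded as formal power series in an auxiliary
   variable t with coefficients in h.  The bracket extends to series by convolution
   and still satisfies the left Leibniz identity, so for a series Y without constant
   term exp(ad Y) = sum_k (ad Y)^k / k! is multiplicative for the extended bracket.
   The right-hand side of the theorem is the coefficient of t^n in
   exp(ad Y_B) exp(ad (x t)) y, where Y_B = sum_(l >= 2) B_l(x) t^l; hence it obeys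
   the same recursion in its last argument as A_(n,1)(x, y).

   Once B_2, ..., B_(n-1) are fixed, the
   difference between A_(n,1)(x, .) and the right-hand side computed with B_n = 0 is
   a derivation.  It is the diagonal of an invariant multilinear map, which may be
   symmetrized; by polarization every value of the symmetrized map is a derivation,
   hence inner since H^1 = 0, and this defines B_n.  Since H^0 = 0, ad is injective,
   which makes B_n invariant and, as symmetric multilinear maps are determined by
   their diagonal, unique. *)

Lemma vpoly_coef_eq0 (R : numFieldType) (h : vectType R) (N : nat) (a : nat -> h) :
  (forall c : R, \sum_(k < N) c ^+ k *: a k = 0) -> forall k, (k < N)%N -> a k = 0.
Proof.
move=> a_root k kN; rewrite (coord_vbasis (memvf (a k))); apply: big1 => i _.
pose p : {poly R} := \poly_(j < N) coord (vbasis fullv) i (a j).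
have p0 : p = 0.
  apply: (@roots_geq_poly_eq0 _ _ [seq j%:R | j <- iota 0 N]).
  - apply/allP => c _; rewrite /root horner_poly.
    have /(congr1 (coord (vbasis fullv) i)) := a_root c.
    rewrite linear0 linear_sum /= => E; apply/eqP/(etrans _ E).
    by apply: eq_bigr => j _; rewrite linearZ /= mulrC.
  - by rewrite map_inj_uniq ?iota_uniq // => x y /eqP; rewrite eqr_nat => /eqP.
  - by rewrite size_map size_iota size_poly.
have := congr1 (fun q : {poly R} => q`_k) p0.
by rewrite coef_poly kN coef0 => ->; rewrite scale0r.
Qed.

Section Polarization.
Variables (R : realType) (h : vectType R).

Definition patch (m : nat) (T : {set 'I_m}) (f zs : 'I_m -> h) : 'I_m -> h :=
  fun i => if i \in T then f i else zs i.

Lemma multilinear_patch_poly (m : nat) (F : ('I_m -> h) -> h) (v w : h) :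
  is_multilinear F ->
  forall (T : {set 'I_m}) (zs : 'I_m -> h), exists a : nat -> h,
   [/\ forall k, (#|T| < k)%N -> a k = 0,
       forall c : R, F (patch T (fun _ => v + c *: w) zs) = \sum_(k < #|T|.+1) c ^+ k *: a k,
       a 0%N = F (patch T (fun _ => v) zs) &
       a 1%N = \sum_(i in T) F (fun j => if j == i then w else patch T (fun _ => v) zs j)].
Proof.
move=> Fmulti T; move: {2}#|T| (erefl #|T|) => n.
elim: n T => [|n IH] T cardT zs.
  have -> : T = set0 by apply/cards0_eq.
  have patch0 f : patch set0 f zs = zs.
    by apply: functional_extensionality => i; rewrite /patch in_set0.
  exists (fun k => if k is 0%N then F zs else 0); split.
  - by case.
  - by move=> c; rewrite patch0 cards0 big_ord1 expr0 scale1r.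
  - by rewrite patch0.
  - by rewrite big_set0.
have [p pT] : exists p, p \in T by apply/card_gt0P; rewrite cardT.
pose T' := T :\ p.
have cardT' : #|T'| = n by move: cardT; rewrite (cardsD1 p T) pT add1n => -[].
have pT' : p \notin T' by rewrite in_setD1 eqxx.
have patchT f zs' : patch T f zs' = upd (patch T' f zs') p (f p).
  apply: functional_extensionality => i; rewrite /patch /upd in_setD1.
  by case: (i =P p) => [->|/eqP ne] /=; rewrite ?pT ?ne.
have upd_patch f zs' u : upd (patch T' f zs') p u = patch T' f (upd zs' p u).
  apply: functional_extensionality => i; rewrite /patch /upd.
  by case: (i =P p) => [->|/eqP ne] /=; rewrite ?(negbTE pT').
have [a1 [a1_deg a1_poly a10 a11]] := IH T' cardT' (upd zs p w).
have [a2 [a2_deg a2_poly a20 a21]] := IH T' cardT' (upd zs p v).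
exists (fun k => (if k is k'.+1 then a1 k' else 0) + a2 k); split.
- case=> [|k] //; rewrite cardT => nk.
  by rewrite a1_deg ?a2_deg ?cardT' ?addr0 // ltnW.
- move=> c; rewrite patchT (addrC v) Fmulti !upd_patch (addrC _ v) a1_poly a2_poly.
  rewrite cardT -cardT'.
  under [RHS]eq_bigr do rewrite scalerDr.
  symmetry; rewrite big_split /= big_ord_recl /= scaler0 add0r [X in _ + X]big_ord_recr /=.
  rewrite a2_deg ?cardT' // scaler0 addr0 scaler_sumr; congr (_ + _).
  by apply: eq_bigr => k _; rewrite exprS scalerA.
- by rewrite add0r a20 patchT upd_patch.
- rewrite /= a10 a21 [RHS](bigD1 p) //=; congr (_ + _).
    congr (F _); apply: functional_extensionality => i; rewrite /patch /upd in_setD1.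
    by case: eqP => [->|] //=; rewrite ?eqxx.
  apply: eq_big => [i|i _]; first by rewrite in_setD1 andbC.
  congr (F _); apply: functional_extensionality => j; rewrite /patch /upd in_setD1.
  by case: (j =P i) => // /eqP ne; case: (j =P p) => [->|] //=; rewrite pT.
Qed.

(* Induction on j: F vanishes on the families that are constant from index j on.
   In the step, the coefficient of c in F(x_0, ..., x_(j-1), v + c x_j, ..., v + c x_j)
   is, by symmetry, a nonzero multiple of F(x_0, ..., x_j, v, ..., v). *)
Lemma symmetric_multilinear_diag0 (m : nat) (F : ('I_m -> h) -> h) :
  is_multilinear F -> is_symmetric F -> (forall x, F (cst m x) = 0) ->
  forall xs, F xs = 0.
Proof.
move=> Fmulti Fsym Fdiag.
suff F0 j : (j <= m)%N -> forall xs v, F (fun i => if (i < j)%N then xs i else v) = 0.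
  move=> xs; rewrite -(F0 m (leqnn m) xs 0); congr (F _).
  by apply: functional_extensionality => i; rewrite ltn_ord.
elim: j => [|j IH] jm xs v; first by rewrite -(Fdiag v).
pose p : 'I_m := Ordinal jm.
pose T := [set i : 'I_m | (j <= i)%N].
pose zs (i : 'I_m) := if (i < j)%N then xs i else v.
have pT : p \in T by rewrite inE.
have T_gt0 : (0 < #|T|)%N by apply/card_gt0P; exists p.
have [a [_ a_poly _ a1]] := multilinear_patch_poly v (xs p) Fmulti T zs.
have a_root c : \sum_(k < #|T|.+1) c ^+ k *: a k = 0.
  rewrite -a_poly -(IH (ltnW jm) xs (v + c *: xs p)); congr (F _).
  by apply: functional_extensionality => i; rewrite /patch /zs inE; case: ltnP.
have := vpoly_coef_eq0 a_root (k := 1%N); rewrite ltnS => /(_ T_gt0).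
pose fp i := if i == p then xs p else patch T (fun=> v) zs i.
rewrite a1 (eq_bigr (fun _ => F fp)); last first.
  move=> i iT; rewrite -(Fsym _ (tperm i p)); congr (F _).
  apply: functional_extensionality => i'; rewrite /fp /patch /=.
  case: tpermP => [->|->|/eqP/negbTE-> /eqP/negbTE->]; rewrite ?eqxx ?iT ?pT //.
  by rewrite eq_sym.
rewrite sumr_const -scaler_nat => /eqP; rewrite scaler_eq0 pnatr_eq0 eqn0Ngt T_gt0 /=.
move=> /eqP <-; congr (F _); apply: functional_extensionality => i.
rewrite /fp /patch /zs inE ltnS leq_eqVlt.
case: (i =P p) => [->|ne]; first by rewrite eqxx.
have -> : (i == j :> nat) = false by apply/negP => /eqP E; apply: ne; apply: val_inj.
by case: ltnP.
Qed.

Lemma symmetric_multilinear_eq (m : nat) (F G : ('I_m -> h) -> h) :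
  is_multilinear F -> is_multilinear G -> is_symmetric F -> is_symmetric G ->
  (forall x, F (cst m x) = G (cst m x)) -> F = G.
Proof.
move=> Fmulti Gmulti Fsym Gsym FGdiag; apply: functional_extensionality => xs.
apply/eqP; rewrite -subr_eq0; apply/eqP; move: xs.
apply: (symmetric_multilinear_diag0 (F := fun xs => F xs - G xs)).
- by move=> t i a u v; rewrite Fmulti Gmulti opprD addrACA scalerBr.
- by move=> t s; rewrite Fsym Gsym.
- by move=> x; rewrite FGdiag subrr.
Qed.

End Polarization.

Section LinearMaps.
Variables (R : pzRingType) (U V : lmodType R) (f : U -> V).
Hypothesis f_linear : linear f.

Lemma lin_fun0 : f 0 = 0.
Proof.
have := f_linear 1 0 0; rewrite !scale1r addr0 => f00.
by apply: (@addrI _ (f 0)); rewrite addr0 -f00.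
Qed.

Lemma lin_funD u v : f (u + v) = f u + f v.
Proof. by rewrite -[u in LHS]scale1r f_linear scale1r. Qed.

Lemma lin_funZ a u : f (a *: u) = a *: f u.
Proof. by rewrite -[a *: u]addr0 f_linear lin_fun0 addr0. Qed.

Lemma lin_funB u v : f (u - v) = f u - f v.
Proof. by rewrite -scaleN1r lin_funD lin_funZ scaleN1r. Qed.

Lemma lin_fun_sum I (r : seq I) (P : pred I) (F : I -> U) :
  f (\sum_(i <- r | P i) F i) = \sum_(i <- r | P i) f (F i).
Proof.
elim: r => [|x r IH]; first by rewrite !big_nil lin_fun0.
by rewrite !big_cons; case: (P x); rewrite ?lin_funD IH.
Qed.

End LinearMaps.

Lemma natr_fact_neq0 (R : numDomainType) k : (k`!%:R : R) != 0.
Proof. by rewrite pnatr_eq0 -lt0n fact_gt0. Qed.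

Lemma foldr_iter (T U : Type) (f : U -> U) (s : seq T) (y : U) :
  foldr (fun _ acc => f acc) y s = iter (size s) f y.
Proof. by elim: s => //= a s ->. Qed.

Lemma eq_foldr (T U : Type) (f g : T -> U -> U) (y : U) (s : seq T) :
  (forall i a, f i a = g i a) -> foldr f y s = foldr g y s.
Proof. by move=> fg; elim: s => //= a s ->; rewrite fg. Qed.

Section NatSums.
Variable V : nmodType.

Lemma sum_triangle (f : nat -> nat -> V) n :
  \sum_(0 <= r < n.+1) \sum_(0 <= j < (n - r)%N.+1) f r j =
  \sum_(0 <= a < n.+1) \sum_(0 <= r < a.+1) f r (a - r)%N.
Proof.
elim: n => [|n IH]; first by rewrite !big_nat1.
rewrite big_nat_recr //= subnn big_nat1 [RHS]big_nat_recr //= -IH.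
rewrite [X in _ = _ + X]big_nat_recr //= subnn addrA; congr (_ + _).
rewrite -big_split /=; apply: eq_big_nat => r /andP [_ rn].
by rewrite subSn // big_nat_recr.
Qed.

Lemma sum_triangle_swap (f : nat -> nat -> V) n :
  \sum_(0 <= r < n.+1) \sum_(0 <= j < (n - r)%N.+1) f r j =
  \sum_(0 <= j < n.+1) \sum_(0 <= r < (n - j)%N.+1) f r j.
Proof.
rewrite sum_triangle (sum_triangle (fun j r => f r j)); apply: eq_big_nat => a /andP [_ an].
rewrite big_nat_rev /=; apply: eq_big_nat => j /andP [_ ja].
by rewrite add0n subSS subKn.
Qed.

Lemma big_nat_widen0 (F : nat -> V) a n : (a <= n)%N ->
  (forall i, (a < i)%N -> F i = 0) ->
  \sum_(0 <= i < a.+1) F i = \sum_(0 <= i < n.+1) F i.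
Proof.
move=> an F0; rewrite [RHS](big_cat_nat _ (n := a.+1)) //= [X in _ = _ + X]big1_seq ?addr0 //.
by move=> i /andP [_]; rewrite mem_iota subnKC // => /andP [ai _]; apply: F0.
Qed.

Lemma big_nat_ord_widen n N (F : nat -> V) : (n <= N)%N ->
  \sum_(0 <= r < n.+1) F r = \sum_(t < N.+1) (if (t < n.+1)%N then F t else 0).
Proof. by move=> nN; rewrite big_mkord (big_ord_widen N.+1) // big_mkcond. Qed.

End NatSums.

Section FfunCons.
Variables (T : finType) (k : nat).

Definition fcons (t : T) (l : {ffun 'I_k -> T}) : {ffun 'I_k.+1 -> T} :=
  [ffun i => if unlift ord0 i is Some j then l j else t].

Lemma fcons0 t l : fcons t l ord0 = t.
Proof. by rewrite ffunE unlift_none. Qed.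

Lemma fconsS t l j : fcons t l (lift ord0 j) = l j.
Proof. by rewrite ffunE liftK. Qed.

Lemma big_ffunS (V : nmodType) (P : pred {ffun 'I_k.+1 -> T}) (F : {ffun 'I_k.+1 -> T} -> V) :
  \sum_(l | P l) F l = \sum_(t : T) \sum_(l : {ffun 'I_k -> T} | P (fcons t l)) F (fcons t l).
Proof.
rewrite big_mkcond /=; under [RHS]eq_bigr do rewrite big_mkcond /=.
rewrite pair_big /= (reindex (fun p : T * {ffun 'I_k -> T} => fcons p.1 p.2)) //.
apply: onW_bij; exists (fun l : {ffun 'I_k.+1 -> T} => (l ord0, [ffun j => l (lift ord0 j)])).
  by move=> [t l] /=; congr (_, _); [rewrite fcons0 | apply/ffunP => j; rewrite !ffunE liftK].
move=> l; apply/ffunP => i; rewrite ffunE /=.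
by case: unliftP => [j ->|->]; rewrite ?ffunE.
Qed.

End FfunCons.

Lemma sum_fcons N k (t : 'I_N) (l : {ffun 'I_k -> 'I_N}) :
  (\sum_(i < k.+1) fcons t l i = t + \sum_(i < k) l i)%N.
Proof. by rewrite big_ord_recl fcons0; congr (_ + _)%N; apply: eq_bigr => i _; rewrite fconsS. Qed.

Lemma forall_fcons N k (t : 'I_N) (l : {ffun 'I_k -> 'I_N}) :
  [forall i, (2 <= fcons t l i)%N] = (2 <= t)%N && [forall j, (2 <= l j)%N].
Proof.
apply/forallP/andP => [l2|[t2 /forallP l2] i].
  split; first by have := l2 ord0; rewrite fcons0.
  by apply/forallP => j; have := l2 (lift ord0 j); rewrite fconsS.
by case: (unliftP ord0 i) => [j ->|->]; rewrite ?fconsS ?fcons0.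
Qed.

Lemma foldr_fcons (U : Type) (f : nat -> U -> U) N k (t : 'I_N) (l : {ffun 'I_k -> 'I_N}) w :
  foldr (fun i acc => f (fcons t l i) acc) w (enum 'I_k.+1) =
  f t (foldr (fun i acc => f (l i) acc) w (enum 'I_k)).
Proof.
rewrite enum_ordSl /= foldr_map fcons0; congr (f _ _).
by elim: (enum 'I_k) => //= a s ->; rewrite fconsS.
Qed.

Lemma big_ffun0 (T : finType) (V : nmodType) (P : pred {ffun 'I_0 -> T})
    (F : {ffun 'I_0 -> T} -> V) c :
  (forall l, P l) -> (forall l, F l = c) -> \sum_(l | P l) F l = c.
Proof.
move=> P1 Fc; rewrite (eq_bigl predT) // (eq_bigr (fun _ => c)) //.
by rewrite sumr_const card_ffun card_ord expn0.
Qed.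

Section LeftLeibniz.
Variables (R : realType) (h : vectType R) (br : h -> h -> h).
Hypothesis br_leibniz : left_leibniz br.

Lemma brDZl a u v w : br (a *: u + v) w = a *: br u w + br v w.
Proof. by case: br_leibniz. Qed.

Lemma brDZr a u v w : br u (a *: v + w) = a *: br u v + br u w.
Proof. by case: br_leibniz. Qed.

Lemma brJ u v w : br u (br v w) = br (br u v) w + br v (br u w).
Proof. by case: br_leibniz. Qed.

Lemma br_linearl w : linear (br^~ w). Proof. by move=> a u v; apply: brDZl. Qed.
Lemma br_linearr u : linear (br u). Proof. by move=> a v w; apply: brDZr. Qed.

Lemma br0l w : br 0 w = 0. Proof. exact: (lin_fun0 (br_linearl w)). Qed.
Lemma br0r u : br u 0 = 0. Proof. exact: (lin_fun0 (br_linearr u)). Qed.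
Lemma brDr u v w : br u (v + w) = br u v + br u w. Proof. exact: (lin_funD (br_linearr u)). Qed.
Lemma brZl a u w : br (a *: u) w = a *: br u w. Proof. exact: (lin_funZ (br_linearl w)). Qed.
Lemma brZr a u v : br u (a *: v) = a *: br u v. Proof. exact: (lin_funZ (br_linearr u)). Qed.
Lemma brBl u v w : br (u - v) w = br u w - br v w. Proof. exact: (lin_funB (br_linearl w)). Qed.
Lemma brBr u v w : br u (v - w) = br u v - br u w. Proof. exact: (lin_funB (br_linearr u)). Qed.

Lemma br_suml I (r : seq I) (P : pred I) (F : I -> h) w :
  br (\sum_(i <- r | P i) F i) w = \sum_(i <- r | P i) br (F i) w.
Proof. exact: (lin_fun_sum (br_linearl w)). Qed.

Lemma br_sumr I (r : seq I) (P : pred I) (F : I -> h) u :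
  br u (\sum_(i <- r | P i) F i) = \sum_(i <- r | P i) br u (F i).
Proof. exact: (lin_fun_sum (br_linearr u)). Qed.

Definition diag_invariant (n : nat) (g : h -> h -> h) :=
  exists D : ('I_n -> h) -> h -> h,
    [/\ is_multilinear1 D, is_invariant1 br D & forall x y, g x y = D (cst n x) y].

Lemma diag_invariant_ext n g g' :
  (forall x y, g x y = g' x y) -> diag_invariant n g -> diag_invariant n g'.
Proof. by move=> gg' [D [Dmulti Dinv gD]]; exists D; split => // x y; rewrite -gg'. Qed.

Lemma diag_invariant0 n : diag_invariant n (fun _ _ => 0).
Proof.
exists (fun _ _ => 0); split => //.
- by split=> [y t i a u v|xs a u v]; rewrite scaler0 addr0.
- by move=> x xs y; rewrite br0r big1 // addr0.
Qed.

Lemma diag_invariantDZ n (a : R) g1 g2 :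
  diag_invariant n g1 -> diag_invariant n g2 ->
  diag_invariant n (fun x y => a *: g1 x y + g2 x y).
Proof.
move=> [D [[Dmulti Dlin] Dinv gD]] [E [[Emulti Elin] Einv gE]].
exists (fun xs y => a *: D xs y + E xs y); split.
- split=> [y t i b u v|xs b u v] /=; rewrite ?Dmulti ?Emulti ?Dlin ?Elin.
    by rewrite scalerDr scalerA mulrC -scalerA !scalerDr addrACA.
  by rewrite scalerDr scalerA mulrC -scalerA !scalerDr addrACA.
- by move=> x xs y; rewrite brDr brZr Dinv Einv scalerDr scaler_sumr big_split addrACA.
- by move=> x y; rewrite gD gE.
Qed.

Lemma diag_invariantD n g1 g2 : diag_invariant n g1 -> diag_invariant n g2 ->
  diag_invariant n (fun x y => g1 x y + g2 x y).
Proof.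
by move=> g1P g2P; apply: diag_invariant_ext (diag_invariantDZ 1 g1P g2P) => x y; rewrite scale1r.
Qed.

Lemma diag_invariantZ n (a : R) g : diag_invariant n g ->
  diag_invariant n (fun x y => a *: g x y).
Proof.
move=> gP; apply: diag_invariant_ext (diag_invariantDZ a gP (diag_invariant0 n)) => x y.
by rewrite addr0.
Qed.

Lemma diag_invariantB n g1 g2 : diag_invariant n g1 -> diag_invariant n g2 ->
  diag_invariant n (fun x y => g1 x y - g2 x y).
Proof.
move=> g1P g2P; apply: diag_invariant_ext (diag_invariantDZ (-1) g2P g1P) => x y.
by rewrite scaleN1r addrC.
Qed.

Lemma diag_invariant_sum n I (r : seq I) (P : pred I) (G : I -> h -> h -> h) :
  (forall i, P i -> diag_invariant n (G i)) ->
  diag_invariant n (fun x y => \sum_(i <- r | P i) G i x y).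
Proof.
move=> GP; elim: r => [|i r IH].
  by apply: diag_invariant_ext (diag_invariant0 n) => x y; rewrite big_nil.
case Pi: (P i); last by apply: diag_invariant_ext IH => x y; rewrite big_cons Pi.
by apply: diag_invariant_ext (diag_invariantD (GP i Pi) IH) => x y; rewrite big_cons Pi.
Qed.

Lemma diag_invariant_id : diag_invariant 0 (fun _ y => y).
Proof.
exists (fun _ y => y); split => //.
- by split=> [y t []|].
- by move=> x xs y; rewrite big_ord0 add0r.
Qed.

Lemma diag_invariant_ad : diag_invariant 1 br.
Proof.
exists (fun xs y => br (xs ord0) y); split => //.
- split=> [y t i a u v|xs a u v]; last exact: brDZr.
  by rewrite /upd (ord1 i) eqxx brDZl.
- by move=> x xs y; rewrite big_ord1 /upd eqxx brJ.
Qed.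

Lemma diag_invariant_adB m (B : ('I_m -> h) -> h) :
  is_multilinear B -> is_invariant br B ->
  diag_invariant m (fun x y => br (B (cst m x)) y).
Proof.
move=> Bmulti Binv; exists (fun xs y => br (B xs) y); split => //.
- split=> [y t i a u v|xs a u v]; last exact: brDZr.
  by rewrite Bmulti brDZl.
- by move=> x xs y; rewrite brJ Binv br_suml.
Qed.

Lemma lshift_upd_lshift p q (t : 'I_(p + q) -> h) (j : 'I_p) u :
  (fun k => upd t (lshift q j) u (lshift q k)) = upd (fun k => t (lshift q k)) j u.
Proof. by apply: functional_extensionality => k; rewrite /upd (eq_shift.1.1.1). Qed.

Lemma rshift_upd_lshift p q (t : 'I_(p + q) -> h) (j : 'I_p) u :
  (fun k => upd t (lshift q j) u (rshift p k)) = (fun k => t (rshift p k)).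
Proof. by apply: functional_extensionality => k; rewrite /upd eq_rlshift. Qed.

Lemma rshift_upd_rshift p q (t : 'I_(p + q) -> h) (j : 'I_q) u :
  (fun k => upd t (rshift p j) u (rshift p k)) = upd (fun k => t (rshift p k)) j u.
Proof. by apply: functional_extensionality => k; rewrite /upd (eq_shift.1.1.2). Qed.

Lemma lshift_upd_rshift p q (t : 'I_(p + q) -> h) (j : 'I_q) u :
  (fun k => upd t (rshift p j) u (lshift q k)) = (fun k => t (lshift q k)).
Proof. by apply: functional_extensionality => k; rewrite /upd eq_lrshift. Qed.

Lemma diag_invariant_comp p q g1 g2 : diag_invariant p g1 -> diag_invariant q g2 ->
  diag_invariant (p + q) (fun x y => g1 x (g2 x y)).
Proof.
move=> [D [[Dmulti Dlin] Dinv gD]] [E [[Emulti Elin] Einv gE]].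
exists (fun xs y => D (fun k => xs (lshift q k)) (E (fun k => xs (rshift p k)) y)); split.
- split=> [y t i a u v|xs a u v] /=; last by rewrite Elin Dlin.
  rewrite -(splitK i); case: (split i) => j /=.
    by rewrite !lshift_upd_lshift !rshift_upd_lshift Dmulti.
  by rewrite !rshift_upd_rshift !lshift_upd_rshift Emulti Dlin.
- move=> x xs y; rewrite Dinv Einv (lin_funD (Dlin _)) (lin_fun_sum (Dlin _)).
  rewrite big_split_ord -!addrA; congr (_ + _).
    by apply: eq_bigr => j _; rewrite lshift_upd_lshift rshift_upd_lshift.
  by congr (_ + _); apply: eq_bigr => j _; rewrite rshift_upd_rshift lshift_upd_rshift.
- by move=> x y; rewrite gD gE.
Qed.

Lemma upd_comp_perm n (t : 'I_n -> h) (s : 'S_n) i u :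
  upd t i u \o s = upd (t \o s) (s^-1 i)%g u.
Proof.
apply: functional_extensionality => j; rewrite /upd /=.
by rewrite -(inj_eq (@perm_inj _ (s^-1)%g)) -permM mulgV perm1.
Qed.

Lemma diag_invariant_symmetric n g : diag_invariant n g ->
  exists D : ('I_n -> h) -> h -> h,
    [/\ is_multilinear1 D, is_invariant1 br D, is_symmetric1 D
      & forall x y, g x y = D (cst n x) y].
Proof.
move=> [D [[Dmulti Dlin] Dinv gD]].
pose c : R := (n`!%:R)^-1.
exists (fun xs y => c *: \sum_(s : 'S_n) D (xs \o s) y); split.
- split=> [y t i a u v|xs a u v] /=;
    rewrite scalerA mulrC -scalerA -scalerDr; congr (_ *: _);
    rewrite scaler_sumr -big_split; apply: eq_bigr => s _ /=; last exact: Dlin.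
  by rewrite !upd_comp_perm Dmulti.
- move=> x xs y; rewrite brZr br_sumr -scaler_sumr -scalerDr; congr (_ *: _).
  rewrite exchange_big -big_split; apply: eq_bigr => s _ /=.
  rewrite Dinv; congr (_ + _).
  rewrite (reindex_inj (@perm_inj _ (s^-1)%g)) /=; apply: eq_bigr => j _.
  by rewrite upd_comp_perm permKV.
- move=> y xs t /=; congr (_ *: _).
  rewrite [RHS](reindex_inj (mulIg t)) /=; apply: eq_bigr => s _.
  by congr (D _ y); apply: functional_extensionality => j /=; rewrite permM.
- move=> x y; rewrite gD (eq_bigr (fun _ => D (cst n x) y)) // sumr_const card_Sn.
  by rewrite -scaler_nat scalerA /c mulVf ?scale1r // natr_fact_neq0.
Qed.

(* A sequence [u : nat -> h] stands for the formal power series sum_n u n t^n. *)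
Definition cbr (u v : nat -> h) : nat -> h :=
  fun n => \sum_(0 <= r < n.+1) br (u r) (v (n - r)%N).

Lemma cbr_leibniz u v w n :
  cbr u (cbr v w) n = cbr (cbr u v) w n + cbr v (cbr u w) n.
Proof.
rewrite /cbr; under eq_bigr do rewrite br_sumr.
under eq_bigr do under eq_bigr do rewrite brJ.
under eq_bigr do rewrite big_split /=.
rewrite big_split /=; congr (_ + _).
  rewrite sum_triangle; apply: eq_big_nat => a /andP [_ an].
  rewrite br_suml; apply: eq_big_nat => r /andP [_ ra].
  by rewrite -subnDA subnKC.
rewrite sum_triangle_swap; apply: eq_big_nat => j /andP [_ jn].
rewrite br_sumr; apply: eq_big_nat => r /andP [_ rj].
by rewrite subnAC.
Qed.

Lemma cbr_sumr Y I (s : seq I) (F : I -> nat -> h) n :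
  cbr Y (fun m => \sum_(i <- s) F i m) n = \sum_(i <- s) cbr Y (F i) n.
Proof. by rewrite /cbr exchange_big /=; apply: eq_bigr => r _; rewrite br_sumr. Qed.

Lemma cbr_scalel (a : R) u v n : cbr (fun m => a *: u m) v n = a *: cbr u v n.
Proof. by rewrite /cbr scaler_sumr; apply: eq_bigr => r _; rewrite brZl. Qed.

Lemma cbr_scaler (a : R) u v n : cbr u (fun m => a *: v m) n = a *: cbr u v n.
Proof. by rewrite /cbr scaler_sumr; apply: eq_bigr => r _; rewrite brZr. Qed.

Definition ad_dpow (Y : nat -> h) (k : nat) (u : nat -> h) : nat -> h :=
  fun n => (k`!%:R)^-1 *: iter k (cbr Y) u n.

Lemma ad_dpow0 Y u : ad_dpow Y 0 u = u.
Proof. by apply: functional_extensionality => n; rewrite /ad_dpow /= invr1 scale1r. Qed.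

Lemma cbr_ad_dpow Y k u n : cbr Y (ad_dpow Y k u) n = k.+1%:R *: ad_dpow Y k.+1 u n.
Proof.
rewrite /ad_dpow cbr_scaler scalerA /=; congr (_ *: _).
by rewrite factS natrM invfM mulrA mulfV ?mul1r // pnatr_eq0.
Qed.

Lemma ad_dpowS Y k u n : ad_dpow Y k.+1 u n = k.+1%:R^-1 *: cbr Y (ad_dpow Y k u) n.
Proof. by rewrite cbr_ad_dpow scalerA mulVf ?scale1r // pnatr_eq0. Qed.

Lemma ad_dpow_cbr Y u v k n :
  ad_dpow Y k (cbr u v) n =
    \sum_(0 <= i < k.+1) cbr (ad_dpow Y i u) (ad_dpow Y (k - i) v) n.
Proof.
elim: k n => [|k IH] n; first by rewrite big_nat1 !ad_dpow0.
rewrite ad_dpowS.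
have -> : ad_dpow Y k (cbr u v) =
          fun m => \sum_(0 <= i < k.+1) cbr (ad_dpow Y i u) (ad_dpow Y (k - i) v) m.
  by apply: functional_extensionality => m; rewrite IH.
rewrite cbr_sumr; under eq_bigr do rewrite cbr_leibniz.
pose T i := cbr (ad_dpow Y i u) (ad_dpow Y (k.+1 - i) v) n.
have T_left i : cbr (cbr Y (ad_dpow Y i u)) (ad_dpow Y (k - i) v) n = i.+1%:R *: T i.+1.
  rewrite /T subSS -cbr_scalel; congr (cbr _ _ n).
  by apply: functional_extensionality => m; rewrite -cbr_ad_dpow.
have T_right i : (i <= k)%N ->
    cbr (ad_dpow Y i u) (cbr Y (ad_dpow Y (k - i) v)) n = (k.+1 - i)%:R *: T i.
  move=> ik; rewrite /T subSn // -cbr_scaler; congr (cbr _ _ n).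
  by apply: functional_extensionality => m; rewrite -cbr_ad_dpow.
rewrite (eq_big_nat _ _ (F2 := fun i => i.+1%:R *: T i.+1 + (k.+1 - i)%:R *: T i)); last first.
  by move=> i /andP [_ ik]; rewrite T_left T_right.
rewrite big_split /=.
have -> : \sum_(0 <= i < k.+1) i.+1%:R *: T i.+1 = \sum_(0 <= i < k.+2) i%:R *: T i.
  by rewrite [RHS]big_nat_recl //= scale0r add0r.
have -> : \sum_(0 <= i < k.+1) (k.+1 - i)%:R *: T i = \sum_(0 <= i < k.+2) (k.+1 - i)%:R *: T i.
  by rewrite [RHS]big_nat_recr //= subnn scale0r addr0.
rewrite -big_split /= scaler_sumr; apply: eq_big_nat => i /andP [_ ik].
by rewrite -scalerDl -natrD subnKC // scalerA mulVf ?scale1r // pnatr_eq0.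
Qed.

Lemma ad_dpow_eq0 Y u : Y 0%N = 0 -> forall k n, (n < k)%N -> ad_dpow Y k u n = 0.
Proof.
move=> Y0 k n nk; rewrite /ad_dpow; suff -> : iter k (cbr Y) u n = 0 by rewrite scaler0.
elim: k n nk => [|k IH] n // nk; rewrite iterS /cbr big1_seq // => r.
rewrite mem_iota add0n => /andP [_ rn].
by case: r rn => [|r] rn; [rewrite Y0 br0l | rewrite IH ?br0r //; lia].
Qed.

(* Truncating at [k <= n] loses nothing: when [Y] has no constant term, the [k]-th
   divided power of [cbr Y] has no coefficient below degree [k]. *)
Definition exp_ad (Y u : nat -> h) : nat -> h :=
  fun n => \sum_(0 <= k < n.+1) ad_dpow Y k u n.

Lemma exp_ad_cbr Y u v : Y 0%N = 0 ->
  forall n, exp_ad Y (cbr u v) n = cbr (exp_ad Y u) (exp_ad Y v) n.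
Proof.
move=> Y0 n; rewrite /exp_ad; under eq_bigr do rewrite ad_dpow_cbr.
pose G i j := cbr (ad_dpow Y i u) (ad_dpow Y j v) n.
rewrite -(sum_triangle G).
have -> : \sum_(0 <= i < n.+1) \sum_(0 <= j < (n - i)%N.+1) G i j =
          \sum_(0 <= i < n.+1) \sum_(0 <= j < n.+1) G i j.
  apply: eq_big_nat => i /andP [_ i_n]; apply: big_nat_widen0; first exact: leq_subr.
  move=> j ij; rewrite /G /cbr big1_seq // => r; rewrite mem_iota add0n => /andP [_ rn].
  case: (ltnP r i) => ri; first by rewrite ad_dpow_eq0 // br0l.
  by rewrite [ad_dpow Y j v _]ad_dpow_eq0 ?br0r //; lia.
rewrite /G /cbr [RHS](eq_big_nat _ _ (F2 := fun r =>
    \sum_(0 <= i < n.+1) \sum_(0 <= j < n.+1) br (ad_dpow Y i u r) (ad_dpow Y j v (n - r)%N))).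
  under eq_bigr do rewrite exchange_big /=.
  rewrite [LHS]exchange_big /=.
  under eq_bigr do rewrite exchange_big /=.
  by rewrite [LHS]exchange_big.
move=> r /andP [_]; rewrite ltnS => rn.
rewrite (big_nat_widen0 (F := fun i => ad_dpow Y i u r) rn); last first.
  by move=> i ri; rewrite ad_dpow_eq0.
rewrite br_suml; apply: eq_bigr => i _; rewrite br_sumr.
apply: big_nat_widen0 => [|j jr]; first exact: leq_subr.
by rewrite [ad_dpow Y j _ _]ad_dpow_eq0 ?br0r.
Qed.

Lemma A0_cst m x y : A0 br m (cst m x) y = (m`!%:R)^-1 *: iter m (br x) y.
Proof.
rewrite /A0 /cst (eq_bigr (fun _ => iter m (br x) y)); last first.
  by move=> s _; rewrite foldr_iter size_enum_ord.
rewrite sumr_const card_Sn -scaler_nat scalerA natrX expr2 invfM -mulrA.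
by rewrite mulVf ?mulr1 // natr_fact_neq0.
Qed.

Lemma A0_0 xs y : A0 br 0 xs y = y.
Proof.
rewrite /A0 (eq_bigr (fun _ => y)); last by move=> s _; rewrite enum_ord0.
by rewrite sumr_const card_Sn /= invr1 scale1r.
Qed.

Lemma A0_1 xs y : A0 br 1 xs y = br (xs ord0) y.
Proof.
rewrite /A0 (eq_bigr (fun _ => br (xs ord0) y)); last first.
  by move=> s _; rewrite enum_ordSl enum_ord0 /= (ord1 (s ord0)).
by rewrite sumr_const card_Sn /= invr1 !scale1r.
Qed.

Definition ser_const (y : h) : nat -> h := fun n => if n is 0%N then y else 0.
Definition ser_X (x : h) : nat -> h := fun n => if n == 1%N then x else 0.
Definition ser_ge2 (b : nat -> h) : nat -> h := fun n => if (2 <= n)%N then b n else 0.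

Lemma cbr_ser_X x w n : cbr (ser_X x) w n = if n is n'.+1 then br x (w n') else 0.
Proof.
rewrite /cbr; case: n => [|n]; first by rewrite big_nat1 /ser_X /= br0l.
rewrite big_nat_recl // /ser_X /= br0l add0r big_nat_recl // /= subn1 /=.
by rewrite big1_seq ?addr0 // => i _; rewrite br0l.
Qed.

Lemma iter_cbr_ser_X x y k n :
  iter k (cbr (ser_X x)) (ser_const y) n = if n == k then iter k (br x) y else 0.
Proof.
elim: k n => [|k IH] n /=; first by case: n.
rewrite cbr_ser_X; case: n => [|n] //=; rewrite IH eqSS.
by case: (n == k) => //; rewrite br0r.
Qed.

Lemma exp_ad_ser_X x y n : exp_ad (ser_X x) (ser_const y) n = A0 br n (cst n x) y.
Proof.
rewrite /exp_ad big_nat_recr //= big1_seq ?add0r.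
  by rewrite /ad_dpow iter_cbr_ser_X eqxx A0_cst.
move=> k; rewrite mem_iota => kn.
by rewrite /ad_dpow iter_cbr_ser_X; case: eqP => [E|_]; [lia | rewrite scaler0].
Qed.

Definition bounded_parts n k (l : {ffun 'I_k -> 'I_n}) (m : nat) :=
  [forall i, (2 <= l i)%N] && (\sum_(i < k) l i <= m)%N.

Lemma bounded_parts0 n (l : {ffun 'I_0 -> 'I_n}) m : bounded_parts l m.
Proof. by rewrite /bounded_parts big_ord0; apply/andP; split => //; apply/forallP => -[]. Qed.

Lemma bounded_parts_half n k (l : {ffun 'I_k -> 'I_n.+1}) :
  (n./2 < k)%N -> bounded_parts l n = false.
Proof.
move=> nk; apply/negP => /andP [/forallP l2 lsum].
have : (\sum_(i < k) 2 <= \sum_(i < k) l i)%N by apply: leq_sum => i _; apply: l2.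
by rewrite sum_nat_const card_ord; move: nk; rewrite ltn_half_double; lia.
Qed.

Lemma iter_cbr_ser_ge2 (b : nat -> h) (W : nat -> h) k N n : (n <= N)%N ->
  iter k (cbr (ser_ge2 b)) W n =
  \sum_(l : {ffun 'I_k -> 'I_N.+1} | bounded_parts l n)
     foldr (fun i acc => br (b (l i)) acc) (W (n - \sum_(i < k) l i)%N) (enum 'I_k).
Proof.
elim: k n => [|k IH] n nN.
  symmetry; apply: big_ffun0 => [l|l]; first exact: bounded_parts0.
  by rewrite enum_ord0 big_ord0 /= subn0.
rewrite iterS {1}/cbr (eq_big_nat _ _ (F2 := fun r => br (ser_ge2 b r)
    (\sum_(l : {ffun 'I_k -> 'I_N.+1} | bounded_parts l (n - r))
       foldr (fun i acc => br (b (l i)) acc) (W (n - r - \sum_(i < k) l i)%N) (enum 'I_k))));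
  last by move=> r /andP [_ rn]; rewrite IH // (leq_trans (leq_subr _ _) nN).
rewrite big_ffunS (big_nat_ord_widen _ nN); apply: eq_bigr => t _; symmetry.
under eq_bigl do rewrite /bounded_parts forall_fcons sum_fcons.
under eq_bigr do rewrite sum_fcons (foldr_fcons (fun m => br (b m))).
case: (ltnP t n.+1) => tn; last by rewrite big_pred0 // => l; apply/negP => /andP [_]; lia.
rewrite /ser_ge2; case: (ltnP 1 t) => t2; last first.
  by rewrite br0l big_pred0 // => l; rewrite (leqNgt 2) ltnS t2.
rewrite br_sumr; apply: eq_big => [l|l _]; last by rewrite subnDA.
by rewrite /bounded_parts; congr (_ && _); apply/idP/idP; lia.
Qed.

Lemma sum_A0_bounded_parts n k (b : nat -> h) (W : nat -> h) :
  \sum_(l : {ffun 'I_k -> 'I_n.+1} | bounded_parts l n)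
     A0 br k (fun i => b (l i)) (W (n - \sum_(i < k) l i)%N) =
  (k`!%:R)^-1 *: \sum_(l : {ffun 'I_k -> 'I_n.+1} | bounded_parts l n)
     foldr (fun i acc => br (b (l i)) acc) (W (n - \sum_(i < k) l i)%N) (enum 'I_k).
Proof.
rewrite /A0 -scaler_sumr exchange_big /= (eq_bigr (fun _ =>
  \sum_(l : {ffun 'I_k -> 'I_n.+1} | bounded_parts l n)
     foldr (fun i acc => br (b (l i)) acc) (W (n - \sum_(i < k) l i)%N) (enum 'I_k))).
  rewrite sumr_const card_Sn -scaler_nat scalerA natrX expr2 invfM -mulrA.
  by rewrite mulVf ?mulr1 // natr_fact_neq0.
move=> s _; pose ls (l : {ffun 'I_k -> 'I_n.+1}) := [ffun i => l (s i)].
have ls_inj : injective ls.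
  move=> l1 l2 /ffunP l12; apply/ffunP => i.
  by have := l12 ((s^-1)%g i); rewrite !ffunE permKV.
have sum_ls l : (\sum_(i < k) ls l i = \sum_(i < k) l i)%N.
  by rewrite [RHS](reindex_inj (@perm_inj _ s)); apply: eq_bigr => i _; rewrite ffunE.
rewrite [RHS](reindex_inj ls_inj); apply: eq_big => [l|l _].
  rewrite /bounded_parts sum_ls; congr (_ && _).
  apply/forallP/forallP => l2 i; first by rewrite ffunE; apply: l2.
  by have := l2 ((s^-1)%g i); rewrite ffunE permKV.
by rewrite sum_ls; apply: eq_foldr => i a; rewrite ffunE.
Qed.

(* The right-hand side of the theorem, with [b l] standing for [B_l(x)]. *)
Definition expansion (b : nat -> h) (x y : h) (n : nat) : h :=
  A0 br n (cst n x) y +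
  \sum_(1 <= k < (n./2).+1)
    \sum_(l : {ffun 'I_k -> 'I_n.+1} | bounded_parts l n)
      A0 br k (fun i => b (l i))
        (A0 br (n - \sum_(i < k) l i) (cst (n - \sum_(i < k) l i) x) y).

Lemma expansionE b x y n :
  expansion b x y n = exp_ad (ser_ge2 b) (exp_ad (ser_X x) (ser_const y)) n.
Proof.
set W := exp_ad (ser_X x) (ser_const y).
have dpowE k : ad_dpow (ser_ge2 b) k W n =
    \sum_(l : {ffun 'I_k -> 'I_n.+1} | bounded_parts l n)
      A0 br k (fun i => b (l i)) (W (n - \sum_(i < k) l i)%N).
  by rewrite sum_A0_bounded_parts /ad_dpow (iter_cbr_ser_ge2 _ _ _ (leqnn n)).
rewrite /exp_ad /expansion; symmetry; under eq_bigr do rewrite dpowE.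
rewrite (big_cat_nat _ (n := 1)) //= big_nat1.
rewrite (big_cat_nat _ (n := (n./2).+1) (p := n.+1)) //=; last first.
  by rewrite ltnS leq_half_double -addnn; lia.
rewrite [X in _ + (_ + X) = _]big1_seq ?addr0; last first.
  move=> k /andP [_]; rewrite mem_index_iota => /andP [nk _].
  by rewrite big_pred0 // => l; apply: bounded_parts_half.
congr (_ + _).
  rewrite (@big_ffun0 _ _ _ _ (W n)) => [|l|l]; first by rewrite /W exp_ad_ser_X.
    exact: bounded_parts0.
  by rewrite A0_0 big_ord0 subn0.
by apply: eq_bigr => k _; apply: eq_bigr => l _; rewrite /W exp_ad_ser_X.
Qed.

Lemma expansion0 b x y : expansion b x y 0 = y.
Proof. by rewrite /expansion big_geq // addr0 A0_0. Qed.

Lemma expansion1 b x y : expansion b x y 1 = br x y.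
Proof. by rewrite /expansion big_geq // addr0 A0_1. Qed.

Lemma ser_const_br y z : ser_const (br y z) = cbr (ser_const y) (ser_const z).
Proof.
apply: functional_extensionality => n; rewrite /cbr.
case: n => [|n]; first by rewrite big_nat1.
by rewrite big_nat_recl //= br0r add0r big1_seq //= => r _; rewrite br0l.
Qed.

Lemma expansion_br b x y z n :
  expansion b x (br y z) n =
    \sum_(0 <= r < n.+1) br (expansion b x y r) (expansion b x z (n - r)%N).
Proof.
rewrite !expansionE ser_const_br.
have -> : exp_ad (ser_X x) (cbr (ser_const y) (ser_const z)) =
          cbr (exp_ad (ser_X x) (ser_const y)) (exp_ad (ser_X x) (ser_const z)).
  by apply: functional_extensionality => m; rewrite exp_ad_cbr.
by rewrite exp_ad_cbr //; apply: eq_bigr => r _; rewrite !expansionE.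
Qed.

Lemma eq_expansion b b' x y n : (forall m, (2 <= m <= n)%N -> b m = b' m) ->
  expansion b x y n = expansion b' x y n.
Proof.
move=> bb'; rewrite /expansion; congr (_ + _); apply: eq_bigr => k _.
apply: eq_bigr => l /andP [/forallP l2 _]; congr (A0 br k _ _).
by apply: functional_extensionality => i; apply: bb'; rewrite l2 /= -ltnS.
Qed.

Lemma bounded_parts_top n k (l : {ffun 'I_k -> 'I_n.+1}) i :
  (2 <= n)%N -> bounded_parts l n -> l i = n :> nat -> k = 1%N.
Proof.
move=> n2 /andP [/forallP l2 lsum] lin.
have : (n + \sum_(j < k | j != i) 2 <= n)%N.
  apply: leq_trans lsum; rewrite [leqRHS](bigD1 i) //= lin leq_add2l.
  by apply: leq_sum => j _; apply: l2.
rewrite sum_nat_const cardC1 card_ord -[X in (_ <= X)%N]addn0 leq_add2l leqn0 muln_eq0 /=.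
by case: k l l2 lsum i lin => [|[|k]] // l l2 lsum [].
Qed.

Definition trunc_at (n : nat) (b : nat -> h) : nat -> h :=
  fun m => if m == n then 0 else b m.

Lemma expansion_top b x y n : (2 <= n)%N ->
  expansion b x y n = expansion (trunc_at n b) x y n + br (b n) y.
Proof.
move=> n2; set b0 := trunc_at n b.
rewrite /expansion -addrA; congr (_ + _).
rewrite !big_nat_recl ?half_gt0 // addrAC; congr (_ + _); last first.
  apply: eq_big_nat => k /andP [k1 _]; apply: eq_bigr => l lP; congr (A0 br k.+1 _ _).
  apply: functional_extensionality => i; rewrite /b0 /trunc_at; case: eqP => // lin.
  by have [k0] := bounded_parts_top n2 lP lin; rewrite k0 in k1.
pose ln : {ffun 'I_1 -> 'I_n.+1} := [ffun _ => ord_max].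
have lnP : bounded_parts ln n.
  by rewrite /bounded_parts big_ord1 ffunE leqnn andbT; apply/forallP => i; rewrite ffunE.
rewrite (bigD1 ln lnP) [X in _ = X + _](bigD1 ln lnP) /= !big_ord1 !ffunE /= subnn.
rewrite !A0_1 !A0_0 !ffunE /b0 /trunc_at /= eqxx br0l add0r addrC; congr (_ + _).
apply: eq_bigr => l /andP [_ l_ln]; congr (A0 br 1 _ _).
apply: functional_extensionality => i; rewrite /b0 (ord1 i); case: eqP => // l0n.
by move: l_ln; rewrite (_ : l = ln) ?eqxx //; apply/ffunP => j; rewrite (ord1 j) ffunE; apply: val_inj.
Qed.

Lemma diag_invariant_foldr I (s : seq I) (f : I -> h -> h) (a : I -> nat) m g :
  (forall i, diag_invariant (a i) (fun x y => br (f i x) y)) -> diag_invariant m g ->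
  diag_invariant (\sum_(i <- s) a i + m)
    (fun x y => foldr (fun i acc => br (f i x) acc) (g x y) s).
Proof.
move=> fP gP; elim: s => [|i s IH]; first by rewrite big_nil.
by rewrite big_cons -addnA; apply: (diag_invariant_comp (fP i) IH).
Qed.

Lemma diag_invariant_A0 k (f : 'I_k -> h -> h) (a : 'I_k -> nat) m g :
  (forall i, diag_invariant (a i) (fun x y => br (f i x) y)) -> diag_invariant m g ->
  diag_invariant (\sum_(i < k) a i + m) (fun x y => A0 br k (fun i => f i x) (g x y)).
Proof.
move=> fP gP; apply: diag_invariantZ; apply: diag_invariant_sum => s _.
have <- : (\sum_(i <- enum 'I_k) a (s i) = \sum_(i < k) a i)%N.
  by rewrite big_enum /= [RHS](reindex_inj (@perm_inj _ s)).
exact: (diag_invariant_foldr _ (f := fun i => f (s i)) (a := fun i => a (s i))).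
Qed.

Lemma diag_invariant_A0cst m : diag_invariant m (fun x y => A0 br m (cst m x) y).
Proof.
have := diag_invariant_A0 (fun _ : 'I_m => diag_invariant_ad) diag_invariant_id.
by rewrite sum_nat_const card_ord muln1 addn0.
Qed.

Lemma diag_invariant_expansion n (b : h -> nat -> h) :
  (forall m, (2 <= m <= n)%N -> diag_invariant m (fun x y => br (b x m) y)) ->
  diag_invariant n (fun x y => expansion (b x) x y n).
Proof.
move=> bP; apply: diag_invariantD; first exact: diag_invariant_A0cst.
apply: diag_invariant_sum => k _; apply: diag_invariant_sum => l /andP [/forallP l2 lsum].
have := diag_invariant_A0 (fun i => bP (l i) _) (diag_invariant_A0cst (n - \sum_(i < k) l i)).
by rewrite subnKC //; apply => i; rewrite l2 /= -ltnS.
Qed.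

Section TrivialCohomology.
Hypotheses (H0 : H0_trivial br) (H1 : H1_trivial br).

Lemma ad_inj c c' : (forall y, br c y = br c' y) -> c = c'.
Proof.
move=> cc'; apply/eqP; rewrite -subr_eq0; apply/eqP; apply: H0 => m.
by rewrite brBl cc' subrr.
Qed.

Lemma diag_derivation_inner n g :
  diag_invariant n g ->
  (forall x y z, g x (br y z) = br y (g x z) + br (g x y) z) ->
  exists Bn : ('I_n -> h) -> h,
    [/\ is_multilinear Bn, is_invariant br Bn, is_symmetric Bn
      & forall x y, g x y = br (Bn (cst n x)) y].
Proof.
move=> gP gder; have [D [[Dmulti Dlin] Dinv Dsym gD]] := diag_invariant_symmetric gP.
have Dder y z : (fun xs => D xs (br y z)) = (fun xs => br y (D xs z) + br (D xs y) z).
  apply: (@symmetric_multilinear_eq _ _ n) => [t i a u v|t i a u v|t s|t s|x] /=.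
  - exact: Dmulti.
  - by rewrite !Dmulti brDZr brDZl scalerDr addrACA.
  - exact: Dsym.
  - by rewrite !Dsym.
  - by rewrite -!gD gder.
have [Bn BnE] : exists Bn : ('I_n -> h) -> h, forall xs y, D xs y = br (Bn xs) y.
  apply: (ClassicalEpsilon.choice (fun xs c => forall y, D xs y = br c y)) => xs.
  apply: H1 => [a u v|y z]; first exact: Dlin.
  by have /(congr1 (fun f => f xs)) := Dder y z.
exists Bn; split.
- by move=> t i a u v; apply: ad_inj => y; rewrite brDZl -!BnE Dmulti.
- move=> x t; apply: ad_inj => y; rewrite br_suml; under eq_bigr do rewrite -BnE.
  by apply: (@addIr _ (D t (br x y))); rewrite -Dinv !BnE [RHS]brJ.
- by move=> t s; apply: ad_inj => y; rewrite -!BnE Dsym.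
- by move=> x y; rewrite gD BnE.
Qed.

Section Recursion.
Variable A : forall n : nat, ('I_n -> h) -> h -> h.
Arguments A : clear implicits.
Hypotheses
  (A1 : forall xs y, A 1%N xs y = br (xs ord0) y)
  (A_ge2 : forall n : nat, (2 <= n)%N ->
     [/\ is_multilinear1 (A n), is_invariant1 br (A n) & is_symmetric1 (A n)])
  (A_br : forall (p : nat) (x y z : h), (1 <= p)%N ->
     A p (cst p x) (br y z) =
       br y (A p (cst p x) z) + br (A p (cst p x) y) z +
       \sum_(1 <= r < p) br (A r (cst r x) y) (A (p - r)%N (cst (p - r) x) z)).

Definition on_diag (B : forall n : nat, ('I_n -> h) -> h) (x : h) : nat -> h :=
  fun m => B m (cst m x).

Definition solves_upto (N : nat) (B : forall n : nat, ('I_n -> h) -> h) :=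
  forall n, (2 <= n <= N)%N ->
    [/\ is_multilinear (B n), is_invariant br (B n), is_symmetric (B n)
      & forall x y, A n (cst n x) y = expansion (on_diag B x) x y n].

Lemma solves_upto_le M N B : (M <= N)%N -> solves_upto N B -> solves_upto M B.
Proof. by move=> MN BP n /andP [n2 nM]; apply: BP; rewrite n2 (leq_trans nM MN). Qed.

Lemma eq_solves_upto N B B' : (forall n, (2 <= n <= N)%N -> B n = B' n) ->
  solves_upto N B -> solves_upto N B'.
Proof.
move=> BB' BP n nP; rewrite -BB' //; have [Bmulti Binv Bsym BA] := BP n nP.
split=> // x y; rewrite BA; apply: eq_expansion => m /andP [m2 mn].
by rewrite /on_diag BB' // m2 (leq_trans mn); case/andP: nP.
Qed.

Lemma solves_upto_uniq N B B' : solves_upto N B -> solves_upto N B' ->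
  forall n, (2 <= n <= N)%N -> B n = B' n.
Proof.
move=> BP B'P; elim/ltn_ind => n IH nP; have /andP [n2 nN] := nP.
have [Bmulti _ Bsym BA] := BP n nP; have [B'multi _ B'sym B'A] := B'P n nP.
apply: symmetric_multilinear_eq => // x; apply: ad_inj => y.
have := BA x y; rewrite B'A (expansion_top (on_diag B x)) // (expansion_top (on_diag B' x)) //.
rewrite (eq_expansion (b' := trunc_at n (on_diag B x))) => [/addrI -> //|m /andP [m2 mn]].
rewrite /trunc_at; case: eqP => // /eqP mn'.
rewrite /on_diag IH //; first by rewrite ltn_neqAle mn' mn.
by rewrite m2 (leq_trans mn nN).
Qed.

Lemma defect_derivation n b x : (1 <= n)%N ->
  (forall r y, (1 <= r < n)%N -> A r (cst r x) y = expansion b x y r) ->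
  forall y z,
    A n (cst n x) (br y z) - expansion b x (br y z) n =
    br y (A n (cst n x) z - expansion b x z n) + br (A n (cst n x) y - expansion b x y n) z.
Proof.
move=> n1 Alow y z; rewrite A_br // expansion_br.
rewrite [in X in _ - X]big_ltn // [in X in _ - X]big_nat_recr //=.
rewrite subn0 subnn !expansion0 brBr brBl.
have -> : \sum_(1 <= r < n) br (A r (cst r x) y) (A (n - r)%N (cst (n - r)%N x) z) =
          \sum_(1 <= r < n) br (expansion b x y r) (expansion b x z (n - r)).
  by apply: eq_big_nat => r /andP [r1 rn]; rewrite !Alow //; lia.
by rewrite (addrC (br y (expansion b x z n))) opprD addrA addrKA addrAC -addrA addrACA.
Qed.

Definition extend_at (B : forall m : nat, ('I_m -> h) -> h) (n : nat)
    (Bn : ('I_n -> h) -> h) (m : nat) : ('I_m -> h) -> h :=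
  if @eqP _ n m is ReflectT e then ecast m (('I_m -> h) -> h) e Bn else B m.
Arguments extend_at B {n} Bn m.

Lemma extend_at_eq B n (Bn : ('I_n -> h) -> h) : extend_at B Bn n = Bn.
Proof. by rewrite /extend_at; case: eqP => // e; rewrite eq_axiomK. Qed.

Lemma extend_at_neq B n (Bn : ('I_n -> h) -> h) m : m != n -> extend_at B Bn m = B m.
Proof. by move=> mn; rewrite /extend_at; case: eqP => // e; rewrite e eqxx in mn. Qed.

Lemma solves_upto_succ N B : (1 <= N)%N -> solves_upto N B ->
  exists B', solves_upto N.+1 B'.
Proof.
move=> N1 BP; set n := N.+1; have n2 : (2 <= n)%N by [].
pose b x := trunc_at n (on_diag B x).
have Alow x r y : (1 <= r < n)%N -> A r (cst r x) y = expansion (b x) x y r.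
  case/andP=> r1 rn; rewrite (eq_expansion (b' := on_diag B x)) => [|m /andP [_ mr]].
    case: (ltnP 1 r) => [r2|r1']; first by have [_ _ _ ->] := BP r (introT andP (conj r2 rn)).
    have -> : r = 1%N by apply/eqP; rewrite eqn_leq r1 r1'.
    by rewrite A1 expansion1.
  by rewrite /b /trunc_at ifN // neq_ltn (leq_ltn_trans mr rn).
pose D x y := A n (cst n x) y - expansion (b x) x y n.
have DP : diag_invariant n D.
  apply: diag_invariantB; first by have [Amulti Ainv _] := A_ge2 n2; exists (A n).
  apply: diag_invariant_expansion => m /andP [m2 mn]; rewrite /b /trunc_at.
  case: eqP => [_|/eqP mn'].
    by apply: diag_invariant_ext (diag_invariant0 m) => x y; rewrite br0l.
  have mN : (2 <= m <= N)%N by rewrite m2 -ltnS ltn_neqAle mn' mn.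
  by have [Bmulti Binv _ _] := BP m mN; apply: diag_invariant_adB.
have [Bn [Bmulti Binv Bsym BnD]] :=
  diag_derivation_inner DP (fun x => defect_derivation (ltnW n2) (Alow x)).
have B'N : solves_upto N (extend_at B Bn).
  apply: eq_solves_upto BP => m /andP [_ mN].
  by rewrite extend_at_neq // neq_ltn ltnS mN.
exists (extend_at B Bn) => m /andP [m2]; rewrite leq_eqVlt ltnS => /orP [/eqP ->|mN].
  rewrite extend_at_eq; split=> // x y.
  rewrite (expansion_top _ _ _ n2) /on_diag extend_at_eq -BnD /D.
  rewrite (eq_expansion (b' := b x)) ?subrKC // => l /andP [_ ln].
  by rewrite /b /trunc_at; case: eqP => // /eqP ln'; rewrite extend_at_neq.
by apply: B'N; rewrite m2.
Qed.

Lemma exists_solves_upto N : exists B, solves_upto N B.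
Proof.
elim: N => [|N [B BP]]; first by exists (fun _ _ => 0) => n /andP [n2 n0]; lia.
have [N0|N1] := posnP N; last exact: solves_upto_succ N1 BP.
by exists B; rewrite N0 => n /andP [n2 n1]; lia.
Qed.

Lemma exists_solution : exists B, forall N, solves_upto N B.
Proof.
have [Bs BsP] := ClassicalEpsilon.choice _ exists_solves_upto.
exists (fun n => Bs n n) => N; apply: eq_solves_upto (BsP N) => n /andP [n2 nN].
by apply: (solves_upto_uniq (solves_upto_le nN (BsP N)) (BsP n)); rewrite n2 leqnn.
Qed.

End Recursion.
End TrivialCohomology.
End LeftLeibniz.

Theorem theorem2 (R : realType) (h : vectType R) (br : h -> h -> h)
  (A : forall n : nat, ('I_n -> h) -> h -> h) :
  left_leibniz br -> H0_trivial br -> H1_trivial br ->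
  (forall xs y, A 0%N xs y = y) ->
  (forall xs y, A 1%N xs y = br (xs ord0) y) ->
  (forall n : nat, (2 <= n)%N ->
     [/\ is_multilinear1 (A n), is_invariant1 br (A n) & is_symmetric1 (A n)]) ->
  (forall (p : nat) (x y z : h), (1 <= p)%N ->
     A p (cst p x) (br y z) =
       br y (A p (cst p x) z) + br (A p (cst p x) y) z +
       \sum_(1 <= r < p) br (A r (cst r x) y) (A (p - r)%N (cst (p - r) x) z)) ->
  let good (B : forall n : nat, ('I_n -> h) -> h) :=
    (forall n : nat, (2 <= n)%N ->
       [/\ is_multilinear (B n), is_invariant br (B n) & is_symmetric (B n)]) /\
    (forall (n : nat) (x y : h), (2 <= n)%N ->
       A n (cst n x) y =
         A0 br n (cst n x) y +
         \sum_(1 <= k < (n./2).+1)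
           \sum_(l : {ffun 'I_k -> 'I_n.+1} |
                   [forall i, (2 <= l i)%N] && ((\sum_(i < k) (l i : nat))%N <= n)%N)
             A0 br k (fun i : 'I_k => B (l i) (cst (l i) x))
                (A0 br (n - \sum_(i < k) (l i : nat))%N (cst (n - \sum_(i < k) (l i : nat))%N x) y)) in
  exists B : forall n : nat, ('I_n -> h) -> h,
    good B /\
    forall B' : forall n : nat, ('I_n -> h) -> h,
      good B' -> forall n : nat, (2 <= n)%N -> B' n = B n.
Proof.
move=> br_leibniz H0 H1 _ A1 A_ge2 A_br good.
(* [A 0] never enters the recursion: [A_br] only involves degrees between 1 and p. *)
have goodP B : good B <-> forall N, solves_upto br A N B.
  split=> [[Bprops BA] N n /andP [n2 _]|BP].
    by have [Bmulti Binv Bsym] := Bprops n n2; split=> // x y; apply: BA.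
  have diagP n : (2 <= n)%N -> (2 <= n <= n)%N by move=> n2; rewrite n2 leqnn.
  by split=> [n /diagP/(BP n) [] | n x y /diagP/(BP n) []].
have [B BP] := exists_solution br_leibniz H0 H1 A1 A_ge2 A_br.
exists B; split=> [|B' /goodP B'P n n2]; first exact/goodP.
by apply: (solves_upto_uniq br_leibniz H0 (B'P n) (BP n)); rewrite n2 leqnn.
Qed.
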